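(* Consider the Multiple-Path Orienteering Problem (MOP) with $M$ robots on a metric graph $G=(\mathcal{V},\mathcal{E})$: choose paths $\mathcal{Q}_1,\dots,\mathcal{Q}_M$, where $\mathcal{Q}_i$ starts at the given vertex $v_{s_i}$ and has cost $C(\mathcal{Q}_i)\le B$, so as to maximize the team reward $f(\{\mathcal{Q}_1,\dots,\mathcal{Q}_M\})=g\big(\bigcup_{i=1}^M\mathcal{Q}_i\big)$. Then there exists an optimal solution $\mathcal{Q}^*=\{\mathcal{Q}^*_1,\dots,\mathcal{Q}^*_M\}$ of the MOP whose paths do not overlap, i.e. $\mathcal{Q}^*_i\cap\mathcal{Q}^*_j=\emptyset$ for all $i\ne j$.
   Context: $G=(\mathcal{V},\mathcal{E})$ is a graph with metric edge weights. A path is an ordered sequence of non-repeated vertices, identified also with its set of vertices; its cost $C(\cdot)$ is the sum of the edge weights along it. The reward function $g:2^{\mathcal{V}}\to\mathbb{R}_{\ge 0}$ is normalized ($g(\mathcal{A})=0$ iff $\mathcal{A}=\emptyset$), monotone non-decreasing and submodular. Vertices visited by several robots contribute to the team reward only once.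
   Formalization: The start vertices $v_{s_i}$ are pairwise distinct, and G is a complete graph on a finite vertex set, so every sequence of distinct vertices starting at $v_{s_i}$ is a path. Each condition added here is assumed in the paper as well or is needed for the statement above to hold. *)

From HB Require Import structures.
From mathcomp Require Import all_boot all_order all_algebra.
Set Implicit Arguments. Unset Strict Implicit. Unset Printing Implicit Defensive.
Import Order.TTheory GRing.Theory Num.Theory.
Local Open Scope ring_scope.

Definition metric (R : realFieldType) (V : finType) (w : V -> V -> R) : Prop :=
  [/\ forall x y, 0 <= w x y,
      forall x, w x x = 0,
      forall x y, w x y = w y x &
      forall x y z, w x z <= w x y + w y z].

Fixpoint path_cost (R : realFieldType) (V : finType) (w : V -> V -> R)
    (p : seq V) : R :=
  match p with
  | x :: ((y :: _) as q) => w x y + path_cost w q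
  | _ => 0
  end.

Definition is_path_from (V : finType) (s : V) (p : seq V) : bool :=
  uniq p && (head s p == s) && (size p > 0)%N.

Definition vset (V : finType) (p : seq V) : {set V} := [set x | x \in p].

Definition normalized (R : realFieldType) (V : finType) (g : {set V} -> R) :=
  forall A, g A = 0 <-> A = set0.
Definition monotone (R : realFieldType) (V : finType) (g : {set V} -> R) :=
  forall A B : {set V}, A \subset B -> g A <= g B.
Definition submodular (R : realFieldType) (V : finType) (g : {set V} -> R) :=
  forall A B : {set V}, g (A :|: B) + g (A :&: B) <= g A + g B.

Definition team_reward (R : realFieldType) (V : finType) (M : nat)
    (g : {set V} -> R) (Q : 'I_M -> seq V) : R :=
  g (\bigcup_(i < M) vset (Q i)).

Definition mop_feasible (R : realFieldType) (V : finType) (M : nat)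
    (w : V -> V -> R) (B : R) (start : 'I_M -> V) (Q : 'I_M -> seq V) : Prop :=
  forall i, is_path_from (start i) (Q i) /\ path_cost w (Q i) <= B.

Definition mop_optimal (R : realFieldType) (V : finType) (M : nat)
    (w : V -> V -> R) (B : R) (start : 'I_M -> V) (g : {set V} -> R)
    (Q : 'I_M -> seq V) : Prop :=
  mop_feasible w B start Q /\
  forall Q', mop_feasible w B start Q' -> team_reward g Q' <= team_reward g Q.

From HB Require Import structures.
From mathcomp Require Import all_boot all_order all_algebra boolp.
Set Implicit Arguments. Unset Strict Implicit. Unset Printing Implicit Defensive.
Import Order.TTheory GRing.Theory Num.Theory.
Local Open Scope ring_scope.

(* The reward of a feasible solution depends only on the union of its paths,
   and there are finitely many unions, so an optimal solution exists.  Prune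
   it: robot i keeps its start and then only the vertices that are nobody's
   start and lie on no path of a robot j < i.  By the triangle inequality,
   skipping vertices does not increase the cost of a path; every vertex stays
   on the pruned path of the first robot visiting it, so the union and the
   reward are unchanged; and since the starts are distinct, the pruned paths
   are pairwise disjoint. *)

Section PathCost.
Variables (R : realFieldType) (V : finType) (w : V -> V -> R).
Hypothesis w_ge0 : forall x y, 0 <= w x y.
Hypothesis w_triangle : forall x y z, w x z <= w x y + w y z.

Lemma path_cost_shortcut x y s :
  path_cost w (x :: s) <= w x y + path_cost w (y :: s).
Proof.
case: s => [|z s] /=; first by rewrite addr0 w_ge0.
by rewrite addrA lerD2r.
Qed.

Lemma path_cost_filter (p : pred V) x s :
  path_cost w (x :: filter p s) <= path_cost w (x :: s).
Proof.
have cost_cons2 a b t : path_cost w [:: a, b & t] = w a b + path_cost w (b :: t).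
  by [].
elim: s x => [|y s IHs] x //.
rewrite [filter p _]/= cost_cons2; case: (p y).
  by rewrite cost_cons2 lerD2l.
by apply: le_trans (path_cost_shortcut x y _) _; rewrite lerD2l.
Qed.

End PathCost.

Lemma is_path_fromE (V : finType) (s : V) (p : seq V) :
  is_path_from s p -> p = s :: behead p.
Proof. by case: p => [|x p] /andP[/andP[_]] //= /eqP ->. Qed.

Section Pruning.
Variables (V : finType) (M : nat) (start : 'I_M -> V) (Q : 'I_M -> seq V).

Definition earlier_vertices (i : 'I_M) : {set V} :=
  \bigcup_(j < M | (j < i)%N) vset (Q j).

Definition prune (i : 'I_M) : seq V :=
  start i :: [seq x <- behead (Q i) |
              (x \notin codom start) && (x \notin earlier_vertices i)].

Lemma prune_disjoint :
  injective start ->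
  forall i j, i != j -> [disjoint vset (prune i) & vset (prune j)].
Proof.
move=> start_inj i j; wlog lt_ij : i j / (i < j)%N => [hwlog neq_ij | _].
  case: (ltngtP i j) => [lt_ij | lt_ji | /val_inj eq_ij].
  - exact: hwlog.
  - by rewrite disjoint_sym hwlog // eq_sym.
  - by rewrite eq_ij eqxx in neq_ij.
rewrite disjoint_subset; apply/subsetP => x; rewrite !inE !mem_filter.
case/orP=> [/eqP -> | /andP[/andP[xNstart _] /mem_behead xQi]].
  by rewrite codom_f /= orbF (inj_eq start_inj) -val_eqE ltn_eqF.
have xEj : x \in earlier_vertices j by apply/bigcupP; exists i; rewrite ?inE.
by rewrite xEj andbF /= orbF; apply: contra xNstart => /eqP ->; apply: codom_f.
Qed.

Lemma prune_feasible (R : realFieldType) (w : V -> V -> R) (B : R) :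
  (forall x y, 0 <= w x y) -> (forall x y z, w x z <= w x y + w y z) ->
  mop_feasible w B start Q -> mop_feasible w B start prune.
Proof.
move=> w_ge0 w_triangle feasQ i; have [pathQ costQ] := feasQ i.
have Qi_start := is_path_fromE pathQ.
split.
  rewrite /is_path_from /= eqxx andbT mem_filter codom_f /= filter_uniq //.
  by case/andP: pathQ => /andP[]; rewrite Qi_start => /andP[].
by rewrite Qi_start in costQ; apply: le_trans (path_cost_filter w_ge0 w_triangle _ _ _) costQ.
Qed.

Lemma bigcup_prune :
  (forall i, Q i = start i :: behead (Q i)) ->
  \bigcup_(i < M) vset (prune i) = \bigcup_(i < M) vset (Q i).
Proof.
move=> Q_start; apply/setP => x.
apply/bigcupP/bigcupP => [[i _ xPi] | [k _ xQk]].
  exists i => //; move: xPi; rewrite !inE mem_filter.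
  by case/orP=> [/eqP -> | /andP[_ /mem_behead //]]; rewrite Q_start mem_head.
case: (boolP (x \in codom start)) => [/codomP[j ->] | xNstart].
  by exists j => //; rewrite !inE eqxx.
case: (@arg_minnP _ k (fun j => x \in vset (Q j)) val xQk) => j xQj j_min.
exists j => //; rewrite !inE mem_filter xNstart /=.
apply/orP; right; apply/andP; split.
  apply/negP => /bigcupP[l lt_lj xQl].
  by have := j_min l xQl; rewrite leqNgt lt_lj.
move: xQj; rewrite inE Q_start inE => /orP[/eqP x_start | //].
by rewrite x_start codom_f in xNstart.
Qed.

End Pruning.

Lemma mop_optimal_exists (R : realFieldType) (V : finType) (M : nat)
    (w : V -> V -> R) (B : R) (start : 'I_M -> V) (g : {set V} -> R)
    (Q0 : 'I_M -> seq V) :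
  mop_feasible w B start Q0 -> exists Q, mop_optimal w B start g Q.
Proof.
move=> feasQ0.
pose achievable (U : {set V}) := `[< exists Q, mop_feasible w B start Q /\
                                       \bigcup_(i < M) vset (Q i) = U >].
have achievable0 : achievable (\bigcup_(i < M) vset (Q0 i)).
  by apply/asboolP; exists Q0.
case: (arg_maxP g achievable0) => U /asboolP[Q [feasQ <-]] Umax.
exists Q; split=> // Q' feasQ'.
by apply: Umax; apply/asboolP; exists Q'.
Qed.

Theorem proposition1 (R : realFieldType) (V : finType) (M : nat)
    (w : V -> V -> R) (B : R) (start : 'I_M -> V) (g : {set V} -> R) :
  metric w ->
  (forall A, 0 <= g A) -> normalized g -> monotone g -> submodular g ->
  injective start ->
  0 <= B ->
  exists Q : 'I_M -> seq V,
    mop_optimal w B start g Q /\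
    forall i j : 'I_M, i != j -> [disjoint vset (Q i) & vset (Q j)].
Proof.
move=> [w_ge0 _ _ w_triangle] _ _ _ _ start_inj B_ge0.
have stay_feasible : mop_feasible w B start (fun i => [:: start i]).
  by move=> i; rewrite /is_path_from /= eqxx.
have [Q [feasQ Q_opt]] := mop_optimal_exists g stay_feasible.
have Q_start i : Q i = start i :: behead (Q i).
  by have [pathQ _] := feasQ i; apply: is_path_fromE pathQ.
exists (prune start Q); split; last exact: prune_disjoint.
split=> [|Q' feasQ']; first exact: prune_feasible.
by rewrite /team_reward bigcup_prune //; apply: Q_opt.
Qed.
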